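(* Let $n\geq 1$ and let $C$ be a CRC in $G_n$ with covering radius $\rho\geq 1$, $a_0=0$ and $a_1=1$. Then $c_1=1$, and there is a CRC $D$ in the ternary Hamming graph $H(n,3)$ with the same parameter matrix such that $C=\{x\in\mathbb{Z}^n: (x_1\bmod 3,\ldots,x_n\bmod 3)\in D\}$.
   Context: $G_n$: vertex set $\mathbb{Z}^n$, $x\sim y$ iff $\sum_i|x_i-y_i|=1$. $H(n,3)$: vertex set $\{0,1,2\}^n$, adjacent iff differing in exactly one coordinate. For a code $C$ in a graph with covering radius $\rho$, $C_i=\{v:d(v,C)=i\}$; $C$ is a CRC if for all $i,j$ every vertex of $C_i$ has the same number $\alpha_{ij}$ of neighbours in $C_j$, with $\alpha_{ij}=0$ for $|i-j|>1$; $a_i=\alpha_{ii}$, $b_i=\alpha_{i,i+1}$, $c_i=\alpha_{i,i-1}$, and the parameter matrix is $(\alpha_{ij})$. *)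

From mathcomp Require Import all_boot all_order all_algebra.
Set Implicit Arguments. Unset Strict Implicit. Unset Printing Implicit Defensive.
Import GRing.Theory Num.Theory.

Section Graphs.
Variable T : eqType.
Variable adj : rel T.

Definition within (C : T -> Prop) (v : T) (k : nat) : Prop :=
  exists c, exists s : seq T,
    C c /\ (size s <= k)%N /\ path adj c s /\ last c s = v.

(* d(v, C) = i, i.e. v \in C_i *)
Definition dist_is (C : T -> Prop) (v : T) (i : nat) : Prop :=
  within C v i /\ forall j, (j < i)%N -> ~ within C v j.

Definition nbrs_count (S : T -> Prop) (v : T) (k : nat) : Prop :=
  exists s : seq T, uniq s /\ size s = k /\
    forall w, w \in s <-> (adj v w /\ S w).

Definition IsCRC (C : T -> Prop) (rho : nat) (alpha : nat -> nat -> nat) : Prop :=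
  (forall v, exists i, (i <= rho)%N /\ dist_is C v i) /\
  (exists v, dist_is C v rho) /\
  (forall i j, (i <= rho)%N -> (j <= rho)%N ->
     forall v, dist_is C v i -> nbrs_count (fun w => dist_is C w j) v (alpha i j)) /\
  (forall i j, (i <= rho)%N -> (j <= rho)%N -> (i.+1 < j)%N || (j.+1 < i)%N ->
     alpha i j = 0%N).
End Graphs.

Definition Zn (n : nat) := {ffun 'I_n -> int}.
Definition Gadj (n : nat) : rel (Zn n) :=
  fun x y => (\sum_(i < n) `|x i - y i|)%N == 1%N.

Definition H3 (n : nat) := {ffun 'I_n -> 'I_3}.
Definition Hadj (n : nat) : rel (H3 n) :=
  fun x y => #|[set i | x i != y i]| == 1%N.

Definition mod3 (n : nat) (x : Zn n) : H3 n :=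
  [ffun i => inord (absz (x i %% 3)%Z)].

(* Since a_0 = 0, the neighbours c +- e_i of a codeword c lie in C_1.  As a_1 = 1, such
   a vertex y = c + s e_i has a unique C_1-neighbour, and it must be the reflection
   c + 2s e_i of c through y: any other candidate would itself have two C_1-neighbours.
   Comparing reflections shows that a C_1-vertex has a single codeword neighbour
   (c_1 = 1), and that the codeword neighbour of c + 2s e_i is c + 3s e_i.  So C is
   invariant under the translations by 3 e_i, i.e. it is the preimage of a code D in
   H(n,3) under reduction mod 3.  This reduction maps the neighbours of x bijectively
   onto those of its image, so it preserves distances to the code and neighbour
   counts, and D is a CRC with the same parameter matrix. *)

From mathcomp Require Import all_boot all_algebra zify.
Import GRing.Theory.
Set Implicit Arguments. Unset Strict Implicit. Unset Printing Implicit Defensive.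

Section Distance.
Variables (T : eqType) (adj : rel T).
Implicit Types (C S : T -> Prop) (v w : T).

Lemma within0 C v : within adj C v 0 <-> C v.
Proof.
split; last by move=> Cv; exists v, [::].
by case=> c [s [Cc [sz [_ <-]]]]; case: s sz.
Qed.

Lemma withinS C v k : within adj C v k.+1 <->
  within adj C v k \/ exists u, within adj C u k /\ adj u v.
Proof.
split.
- case=> c [s [Cc [sz [p <-]]]].
  have [le_sk | lt_ks] := leqP (size s) k; first by left; exists c, s.
  right; move: p sz lt_ks; case/lastP: s => [|s u] //=.
  rewrite rcons_path last_rcons size_rcons => /andP [p a] sz _.
  by exists (last c s); split => //; exists c, s.
- case=> [[c [s [Cc [sz [p l]]]]] | [u [[c [s [Cc [sz [p l]]]]] a]]].
    by exists c, s; do !split => //; apply: leqW.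
  exists c, (rcons s v); do !split => //.
  + by rewrite size_rcons.
  + by rewrite rcons_path p l a.
  + by rewrite last_rcons.
Qed.

Lemma dist_is0 C v : dist_is adj C v 0 <-> C v.
Proof. by split=> [[/within0] | /within0]. Qed.

Lemma dist_is_uniq C v i j : dist_is adj C v i -> dist_is adj C v j -> i = j.
Proof.
case=> wi ni [wj nj]; case: (ltngtP i j) => // lt.
- by case: (nj _ lt).
- by case: (ni _ lt).
Qed.

Lemma dist_is1_notin C v : dist_is adj C v 1 -> ~ C v.
Proof. by move=> d1 /dist_is0 d0; have := dist_is_uniq d1 d0. Qed.

Lemma dist_is1P C v : dist_is adj C v 1 -> exists c, C c /\ adj c v.
Proof.
case=> /withinS [/within0 Cv | [c [/within0 Cc a]]] not0; last by exists c.
by case: (not0 0) => //; apply/within0.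
Qed.

Lemma dist_is1_adj C c v : C c -> adj c v -> ~ C v -> dist_is adj C v 1.
Proof.
move=> Cc a Cv; split; first by apply/withinS; right; exists c; split => //; apply/within0.
by case=> // _ /within0.
Qed.
End Distance.

Section NeighbourCount.
Variables (T : eqType) (adj : rel T).
Implicit Types (S : T -> Prop) (v w : T).

Lemma nbrs_count0 S v w : nbrs_count adj S v 0 -> adj v w -> ~ S w.
Proof.
case=> s [_ [/size0nil -> mem]] a Sw.
by have /mem : adj v w /\ S w by [].
Qed.

Lemma nbrs_count1_uniq S v w1 w2 : nbrs_count adj S v 1 ->
  adj v w1 -> S w1 -> adj v w2 -> S w2 -> w1 = w2.
Proof.
case=> s [_ [sz mem]] a1 S1 a2 S2.
case: s sz mem => [|u [|//]] // _ mem.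
have /mem : adj v w1 /\ S w1 by []; have /mem : adj v w2 /\ S w2 by [].
by rewrite !inE => /eqP -> /eqP ->.
Qed.

Lemma nbrs_count1_ex S v : nbrs_count adj S v 1 -> exists w, adj v w /\ S w.
Proof.
case=> s [_ [sz mem]]; case: s sz mem => [|u [|//]] // _ mem.
by exists u; apply/mem; rewrite inE.
Qed.

Lemma nbrs_count_single S v k c :
  (forall w, adj v w /\ S w <-> w = c) -> nbrs_count adj S v k -> k = 1.
Proof.
move=> Sc [s [us [<- mem]]].
have eq_c : [:: c] =i s by move=> w; rewrite inE; apply/eqP/idP => [/Sc/mem | /mem/Sc].
by apply/eqP; rewrite -(uniq_size_uniq _ eq_c).
Qed.

Lemma eq_nbrs_count S S' v k : (forall w, S w <-> S' w) ->
  nbrs_count adj S v k -> nbrs_count adj S' v k.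
Proof.
move=> eqS [s [us [sz mem]]]; exists s; split => //; split => // w.
by rewrite mem; split=> [] [a /eqS].
Qed.
End NeighbourCount.

Section Covering.
Variables (T U : eqType) (adjT : rel T) (adjU : rel U) (f : T -> U).
Hypotheses (adjT_sym : symmetric adjT) (adjU_sym : symmetric adjU).
Hypothesis f_adj : forall x y, adjT x y -> adjU (f x) (f y).
Hypothesis f_lift : forall x h, adjU (f x) h -> exists y, adjT x y /\ f y = h.
Hypothesis f_inj_nbr : forall x y z, adjT x y -> adjT x z -> f y = f z -> y = z.

Variables (C : T -> Prop) (D : U -> Prop).
Hypothesis C_D : forall x, C x <-> D (f x).

Lemma within_cover k x : within adjT C x k <-> within adjU D (f x) k.
Proof.
elim: k x => [|k IHk] x; first by rewrite within0 within0.
rewrite !withinS IHk; split=> [] [w | [u [wu a]]]; try by left.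
- by right; exists (f u); split; [apply/IHk | apply: f_adj].
- rewrite adjU_sym in a; have [y [a' fy]] := f_lift a.
  by right; exists y; split; [apply/IHk; rewrite fy | rewrite adjT_sym].
Qed.

Lemma dist_is_cover i x : dist_is adjT C x i <-> dist_is adjU D (f x) i.
Proof.
split=> [] [w nw]; split=> [|j /nw + /within_cover] //; exact/within_cover.
Qed.

Lemma nbrs_count_cover (S : T -> Prop) (S' : U -> Prop) x k :
  (forall w, S w <-> S' (f w)) -> nbrs_count adjT S x k -> nbrs_count adjU S' (f x) k.
Proof.
move=> SS' [s [us [<- mem]]]; exists (map f s); split; [|split].
- rewrite map_inj_in_uniq // => y z /mem [ay _] /mem [az _].
  exact: f_inj_nbr ay az.
- by rewrite size_map.
- move=> h; split=> [/mapP [y /mem [a /SS' Sy] ->] | [a S'h]].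
    by split => //; apply: f_adj.
  have [y [a' fy]] := f_lift a; apply/mapP; exists y => //.
  by apply/mem; split => //; apply/SS'; rewrite fy.
Qed.

Lemma IsCRC_cover (g : U -> T) rho alpha : cancel g f ->
  IsCRC adjT C rho alpha -> IsCRC adjU D rho alpha.
Proof.
move=> gK [cov [[v dv] [cnt zer]]]; split; [|split; [|split]] => //.
- move=> h; have [i [le_i d]] := cov (g h).
  by exists i; split => //; rewrite -(gK h) -dist_is_cover.
- by exists (f v); apply/dist_is_cover.
- move=> i j le_i le_j h dh; rewrite -(gK h); apply: (nbrs_count_cover (dist_is_cover j)).
  by apply: cnt => //; rewrite dist_is_cover gK.
Qed.
End Covering.

Section Lattice.
Variable n : nat.
Local Open Scope ring_scope.
Implicit Types (x y : Zn n) (h : H3 n) (i j : 'I_n) (s t : int).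

Definition shift x i s : Zn n := [ffun j => if j == i then x j + s else x j].

Definition unit_step s := s = 1 \/ s = -1.

Lemma shiftE x i s j : shift x i s j = if j == i then x j + s else x j.
Proof. by rewrite ffunE. Qed.

Lemma shift_id x i s : shift x i s i = x i + s.
Proof. by rewrite shiftE eqxx. Qed.

Lemma shift_neq x i s j : j != i -> shift x i s j = x j.
Proof. by rewrite shiftE => /negbTE ->. Qed.

Lemma shiftD x i s t : shift (shift x i s) i t = shift x i (s + t).
Proof. by apply/ffunP=> j; rewrite !shiftE; case: eqP => // _; rewrite addrA. Qed.

Lemma shift0 x i : shift x i 0 = x.
Proof. by apply/ffunP=> j; rewrite shiftE addr0; case: eqP. Qed.

Lemma shiftK x i s : shift (shift x i s) i (- s) = x.
Proof. by rewrite shiftD subrr shift0. Qed.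

Lemma shiftC x i j s t : shift (shift x i s) j t = shift (shift x j t) i s.
Proof.
by apply/ffunP=> k; rewrite !shiftE; case: eqP; case: eqP => // *; rewrite addrAC.
Qed.

Lemma unit_stepN s : unit_step s -> unit_step (- s).
Proof. by case=> ->; [right | left]. Qed.

Lemma unit_step_neq0 s : unit_step s -> s != 0.
Proof. by case=> ->. Qed.

Lemma eq_shift x i j s t : s != 0 -> shift x i s = shift x j t -> i = j /\ s = t.
Proof.
move=> nz_s /ffunP/(_ i); rewrite shift_id shiftE eq_sym.
case: eqVneq => [-> /addrI // | _]; by move: nz_s; lia.
Qed.

Lemma Gadj_shift x i s : unit_step s -> Gadj x (shift x i s).
Proof.
move=> us; rewrite /Gadj (bigD1 i) //= big1 => [|j ji]; last by rewrite shift_neq ?subrr.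
by rewrite shift_id; case: us => ->; lia.
Qed.

Lemma GadjP x y : Gadj x y -> exists i s, unit_step s /\ y = shift x i s.
Proof.
rewrite /Gadj => /eqP sum1.
have [i /= nz_i | all0] := pickP (fun i => `|x i - y i|%N != 0%N); last first.
  by move: sum1; rewrite big1 // => i _; apply/eqP/negbFE/all0.
move: sum1; rewrite (bigD1 i) //= => sum1.
have rest_eq0 (a b : nat) : (a + b = 1 -> a != 0 -> b = 0)%N by lia.
move/eqP: (rest_eq0 _ _ sum1 nz_i); rewrite sum_nat_eq0 => /forallP rest0.
exists i, (y i - x i); split; first by rewrite /unit_step; lia.
apply/ffunP=> j; rewrite shiftE; case: (eqVneq j i) => [-> | ji]; first by rewrite addrC subrK.
by have := rest0 j; rewrite ji /=; lia.
Qed.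

Lemma Gadj_sym : symmetric (@Gadj n).
Proof.
suff G_sym x y : Gadj x y -> Gadj y x by move=> x y; apply/idP/idP; apply: G_sym.
by case/GadjP=> i [s [us ->]]; rewrite -{2}(shiftK x i s); apply/Gadj_shift/unit_stepN.
Qed.

Lemma Hadj_sym : symmetric (@Hadj n).
Proof.
by move=> h h'; rewrite /Hadj; congr (_ == _); apply: eq_card => i; rewrite !inE eq_sym.
Qed.

Lemma HadjP h h' : Hadj h h' -> exists i, h i != h' i /\ forall j, j != i -> h j = h' j.
Proof.
rewrite /Hadj => /cards1P [i hi]; exists i; split; first by have := set11 i; rewrite -hi inE.
move=> j ji; have : j \notin [set i] by rewrite inE.
by rewrite -hi inE negbK => /eqP.
Qed.
End Lattice.

Section Reduction.
Variable n : nat.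
Local Open Scope ring_scope.
Implicit Types (x y z : Zn n) (h : H3 n) (i j : 'I_n) (s t : int).

Definition lift3 h : Zn n := [ffun i => (h i : nat)%:Z].

Lemma mod3E x i : mod3 x i = absz (x i %% 3)%Z :> nat.
Proof. by rewrite ffunE inordK //; lia. Qed.

Lemma eq_mod3 x y i : (mod3 x i == mod3 y i) = ((x i %% 3)%Z == (y i %% 3)%Z).
Proof. by rewrite -val_eqE /= !mod3E; apply/eqP/eqP; lia. Qed.

Lemma lift3K : cancel lift3 (@mod3 n).
Proof.
by move=> h; apply/ffunP=> i; apply: val_inj; rewrite /= mod3E ffunE; have := ltn_ord (h i); lia.
Qed.

Lemma mod3_shift3 x i k : mod3 (shift x i (3 * k)) = mod3 x.
Proof.
by apply/ffunP=> j; apply/eqP; rewrite eq_mod3 shiftE; case: (j =P i) => // _; apply/eqP; lia.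
Qed.

Lemma Hadj_mod3 x y : Gadj x y -> Hadj (mod3 x) (mod3 y).
Proof.
case/GadjP=> i [s [us ->]]; apply/cards1P; exists i; apply/setP=> j.
rewrite !inE eq_mod3 shiftE; case: (eqVneq j i) => [-> | _]; last by rewrite eqxx.
by case: us => ->; lia.
Qed.

Lemma Hadj_mod3_lift x h : Hadj (mod3 x) h -> exists y, Gadj x y /\ mod3 y = h.
Proof.
case/HadjP=> i [neq_i eq_others]; move: neq_i; rewrite -val_eqE /= mod3E => neq_i.
have lt_hi := ltn_ord (h i).
pose s : int := if (h i)%:Z == ((x i + 1) %% 3)%Z then 1 else -1.
have us : unit_step s by rewrite /s; case: ifP; [left | right].
exists (shift x i s); split; first exact: Gadj_shift.
apply/ffunP=> j; have [-> | ji] := eqVneq j i.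
  by apply: val_inj; rewrite /= mod3E shift_id /s; case: ifP; lia.
by rewrite -eq_others //; apply/eqP; rewrite eq_mod3 shift_neq.
Qed.

Lemma mod3_inj_nbr x y z : Gadj x y -> Gadj x z -> mod3 y = mod3 z -> y = z.
Proof.
case/GadjP=> i [s [us ->]]; case/GadjP=> j [t [ut ->]] eq_yz.
have /eqP := congr1 (fun h => h i) eq_yz; rewrite eq_mod3 shift_id shiftE.
have [<- | ij] := eqVneq i j; last by case: us => ->; lia.
by move=> eq_st; congr shift; move: eq_st; case: us => ->; case: ut => ->; lia.
Qed.
End Reduction.

Section Periodic.
Variables (n : nat) (C : Zn n -> Prop).
Local Open Scope ring_scope.
Hypothesis C_shift3 : forall x i, C x <-> C (shift x i 3).

Lemma code_shift_mul3 x i k : C x <-> C (shift x i (3 * k)).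
Proof.
elim/int_rec: k x => [|k IHk|k IHk] x; first by rewrite mulr0 shift0.
  by rewrite IHk (C_shift3 _ i) shiftD; have -> : 3 * Posz k + 3 = 3 * Posz k.+1 by lia.
rewrite (C_shift3 (shift x i _) i) shiftD; have -> : 3 * - Posz k.+1 + 3 = 3 * - Posz k by lia.
exact: IHk.
Qed.

Lemma code_mod3 x y : mod3 x = mod3 y -> C x <-> C y.
Proof.
have [m] := ubnP #|[set j | x j != y j]|; elim: m x => // m IHm x lt_m eq_xy.
have [j neq_j /= | eq_all] := pickP (fun j => x j != y j); last first.
  by have -> : x = y by apply/ffunP=> j; apply/eqP/negbFE/eq_all.
have /eqP := congr1 (fun h : H3 n => h j) eq_xy; rewrite eq_mod3 => /eqP eqm_j.
set x' := shift x j (3 * ((y j - x j) %/ 3)%Z).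
have x'_j : x' j = y j by rewrite shift_id; lia.
rewrite (code_shift_mul3 x j ((y j - x j) %/ 3)%Z) -/x'; apply: IHm; last by rewrite mod3_shift3.
rewrite ltnS in lt_m; apply: leq_trans lt_m; apply: proper_card; apply/properP; split.
  apply/subsetP=> k; rewrite !inE; have [-> | kj] := eqVneq k j; first by rewrite x'_j eqxx.
  by rewrite shift_neq.
by exists j; rewrite !inE ?x'_j ?eqxx.
Qed.
End Periodic.

Section LocalStructure.
Variables (n : nat) (C : Zn n -> Prop).
Local Open Scope ring_scope.
Local Notation C1 y := (dist_is (@Gadj n) C y 1).
Hypothesis C_indep : forall c w, C c -> Gadj c w -> ~ C w.
Hypothesis C1_nbrs_C1 : forall y, C1 y -> nbrs_count (@Gadj n) (fun w => C1 w) y 1.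

Lemma C1_shift c i s : unit_step s -> C c -> C1 (shift c i s).
Proof.
by move=> us Cc; have a := Gadj_shift c i us; apply: dist_is1_adj Cc a (C_indep Cc a).
Qed.

Lemma C1_partner y i s w : unit_step s -> C (shift y i s) -> Gadj y w -> C1 w ->
  w = shift y i (- s).
Proof.
move=> us Cc /GadjP [j [t [ut def_w]]] C1w; subst w.
have C1y : C1 y by rewrite -(shiftK y i s); apply: C1_shift (unit_stepN us) Cc.
have [eq_ji | ji] := eqVneq j i; first subst j.
  by case: us ut Cc C1w => -> [] -> // Cc /dist_is1_notin /(_ Cc).
have C1c' : C1 (shift (shift y i s) j t) by apply: C1_shift.
have a_y : Gadj (shift y j t) y by rewrite Gadj_sym; apply: Gadj_shift.
have a_c' : Gadj (shift y j t) (shift (shift y i s) j t) by rewrite shiftC; apply: Gadj_shift.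
have /ffunP/(_ i) := nbrs_count1_uniq (C1_nbrs_C1 C1w) a_y C1y a_c' C1c'.
rewrite shift_neq 1?eq_sym // shift_id => eq_i.
by case/eqP: (unit_step_neq0 us); apply: (addrI (y i)); rewrite addr0 -eq_i.
Qed.

Lemma C1_reflect y i s : unit_step s -> C (shift y i s) -> C1 (shift y i (- s)).
Proof.
move=> us Cc; have C1y : C1 y by rewrite -(shiftK y i s); apply: C1_shift (unit_stepN us) Cc.
have [w [a_w C1w]] := nbrs_count1_ex (C1_nbrs_C1 C1y).
by rewrite -(C1_partner us Cc a_w C1w).
Qed.

Lemma C1_nbrs_code y k : C1 y -> nbrs_count (@Gadj n) C y k -> k = 1%N.
Proof.
move=> C1y; have [c [Cc]] := dist_is1P C1y; rewrite Gadj_sym => /GadjP [i [s [us def_c]]].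
have [p [a_p C1p]] := nbrs_count1_ex (C1_nbrs_C1 C1y).
have def_p : p = shift y i (- s) by apply: C1_partner; rewrite -?def_c.
apply: (nbrs_count_single (c := c)) => w; split=> [[] | ->]; last first.
  by rewrite def_c; split; [apply: Gadj_shift | rewrite -def_c].
case/GadjP=> j [t [ut ->]] Cw.
have := C1_partner ut Cw a_p C1p; rewrite def_p def_c => /eq_shift [|<- /oppr_inj <- //].
by rewrite oppr_eq0 unit_step_neq0.
Qed.

Hypothesis C1_nbrs_C : forall y, C1 y -> nbrs_count (@Gadj n) C y 1.

Lemma code_shift3 c i s : unit_step s -> C c -> C (shift c i (3 * s)).
Proof.
move=> us Cc; set y := shift c i s.
have C1y : C1 y by apply: C1_shift.
have Cc' : C (shift y i (- s)) by rewrite shiftK.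
have C1d := C1_reflect (unit_stepN us) Cc'; rewrite opprK in C1d.
have [u [a_u Cu]] := nbrs_count1_ex (C1_nbrs_C C1d).
case/GadjP: a_u Cu => j [t [ut ->]] Cu.
have a_dy : Gadj (shift y i s) y.
  by rewrite -{2}(shiftK y i s); apply/Gadj_shift/unit_stepN.
have := C1_partner ut Cu a_dy C1y.
rewrite -{1}(shiftK y i s) => /eq_shift [|eq_ij /oppr_inj eq_st].
  by rewrite oppr_eq0 unit_step_neq0.
by move: Cu; rewrite -eq_ij -eq_st !shiftD; have -> : s + (s + s) = 3 * s by lia.
Qed.

Lemma code_shift3_iff x i : C x <-> C (shift x i 3).
Proof.
split=> [Cx | C3x]; first by rewrite -[3]mulr1; apply: code_shift3 => //; left.
by rewrite -(shiftK x i 3) -mulrN1; apply: code_shift3 => //; right.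
Qed.
End LocalStructure.

Theorem mainTheorem7 (n : nat) (C : Zn n -> Prop) (rho : nat)
    (alpha : nat -> nat -> nat) :
  (1 <= n)%N ->
  IsCRC (@Gadj n) C rho alpha ->
  (1 <= rho)%N ->
  alpha 0%N 0%N = 0%N ->
  alpha 1%N 1%N = 1%N ->
  alpha 1%N 0%N = 1%N /\
  exists D : H3 n -> Prop,
    IsCRC (@Hadj n) D rho alpha /\
    forall x : Zn n, C x <-> D (mod3 x).
Proof.
move=> n_gt0 CRC rho_gt0 a00 a11; have [_ [[_ [[c [_ [Cc _]]] _]] [cnt _]]] := CRC.
have C_indep c' w : C c' -> Gadj c' w -> ~ C w.
  move/dist_is0/(cnt _ _ (leq0n _) (leq0n _)); rewrite a00 => cnt0 a Cw.
  by apply: nbrs_count0 cnt0 a _; apply/dist_is0.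
have C1_nbrs_C1 y : dist_is (@Gadj n) C y 1 ->
    nbrs_count (@Gadj n) (fun w => dist_is (@Gadj n) C w 1) y 1.
  by rewrite -[X in nbrs_count _ _ _ X]a11; apply: cnt.
have C1_nbrs_C y : dist_is (@Gadj n) C y 1 -> nbrs_count (@Gadj n) C y (alpha 1 0)%N.
  by move/(cnt _ _ rho_gt0 (leq0n _)); apply: eq_nbrs_count => w; apply: dist_is0.
have a10 : alpha 1%N 0%N = 1%N.
  have C1y := C1_shift C_indep (Ordinal n_gt0) (s := 1) (or_introl erefl) Cc.
  exact: (C1_nbrs_code C_indep C1_nbrs_C1 C1y (C1_nbrs_C _ C1y)).
split=> //; rewrite a10 in C1_nbrs_C.
have C_D x : C x <-> C (lift3 (mod3 x)).
  by apply: (code_mod3 (code_shift3_iff C_indep C1_nbrs_C1 C1_nbrs_C)); rewrite lift3K.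
exists (fun h => C (lift3 h)); split => //.
exact: (IsCRC_cover (@Gadj_sym n) (@Hadj_sym n) (@Hadj_mod3 n) (@Hadj_mod3_lift n)
  (@mod3_inj_nbr n) C_D (@lift3K n) CRC).
Qed.
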